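(* Let $I$ be an irreducible numerical semigroup and $K\in\mathbb{N}$ such that $\mathrm{F}(I)+K$ is odd and $\mathrm{F}(I)\ge K+1$. Then $[\theta(I),I]$ contains at least one numerical semigroup $S$ with $\mathrm{l}(S)=K$ if and only if $\#(I\setminus\theta(I))\ge\lfloor K/2\rfloor$.
   Context: A numerical semigroup is a subset $S\subseteq\mathbb{N}$ closed under addition with $0\in S$ and $\mathbb{N}\setminus S$ finite; $\mathrm{F}(S)=\max(\mathbb{Z}\setminus S)$; $\langle X\rangle$ is the submonoid generated by $X$. Irreducible: not the intersection of two numerical semigroups properly containing it. $\mathrm{N}(S)=\{s\in S\mid s<\mathrm{F}(S)\}$, $\mathrm{L}(S)=\{x\in\mathbb{N}\setminus S\mid \mathrm{F}(S)-x\notin \mathrm{N}(S)\}$, $\mathrm{l}(S)=\#\mathrm{L}(S)$. $\Delta(S)=\{s\in S\mid s<\frac{\mathrm{F}(S)}{2}\}$, $\theta(S)=\langle\Delta(S)\rangle\cup\{\mathrm{F}(S)+1,\mathrm{F}(S)+2,\ldots\}$. $[A,B]$ is the set of numerical semigroups $X$ with $A\subseteq X\subseteq B$. *)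

From HB Require Import structures.
From mathcomp Require Import all_boot all_order all_algebra.
From Stdlib Require Import ClassicalEpsilon.
Set Implicit Arguments. Unset Strict Implicit. Unset Printing Implicit Defensive.
Import Order.TTheory GRing.Theory Num.Theory.

Definition numsg (S : pred nat) : Prop :=
  [/\ S 0,
      (forall x y, S x -> S y -> S (x + y)) &
      (exists N, forall n, N <= n -> S n)].

Definition subsetP_ (X Y : pred nat) : Prop := forall x, X x -> Y x.

Definition proper_ (X Y : pred nat) : Prop := subsetP_ X Y /\ exists y, Y y /\ ~~ X y.

Definition irreducible_ns (S : pred nat) : Prop :=
  numsg S /\
  ~ (exists S1 S2 : pred nat, numsg S1 /\ numsg S2 /\ proper_ S S1 /\ proper_ S S2 /\
        (forall x, S x = (S1 x && S2 x))).

(* f = max (Z \ S) *)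
Definition is_frob (S : pred nat) (f : int) : Prop :=
  (forall n : nat, (f < Posz n)%R -> S n) /\ (forall n : nat, Posz n = f -> ~~ S n)
  /\ (-1 <= f)%R.

(* Frobenius number F(S) (meaningful for numerical semigroups) *)
Definition frob (S : pred nat) : int := epsilon (inhabits 0%R) (is_frob S).

Definition inN (S : pred nat) (s : nat) : bool := S s && (Posz s < frob S)%R.

(* x in L(S): x in N \ S and F(S) - x not in N(S) (here x <= F(S), so F(S) - x is a nat) *)
Definition inL (S : pred nat) (x : nat) : bool :=
  ~~ S x && ~~ inN S (absz (frob S - Posz x)).

(* l(S) = #L(S); L(S) \subseteq [0, F(S)] since N \ S \subseteq [0, F(S)] *)
Definition lS (S : pred nat) : nat :=
  if (frob S < 0)%R then 0 else count (inL S) (iota 0 (absz (frob S)).+1).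

Definition Delta (S : pred nat) (s : nat) : bool := S s && (Posz (2 * s) < frob S)%R.

Definition generated (X : pred nat) (n : nat) : Prop :=
  exists s : seq nat, all X s /\ sumn s = n.

Definition theta (S : pred nat) (n : nat) : Prop :=
  generated (Delta S) n \/ (frob S < Posz n)%R.

From HB Require Import structures.
From mathcomp Require Import all_boot all_order all_algebra.
From mathcomp Require Import zify boolp.
From Stdlib Require Import ClassicalEpsilon.
Import Order.TTheory GRing.Theory Num.Theory.
Set Implicit Arguments. Unset Strict Implicit. Unset Printing Implicit Defensive.

(* An irreducible numerical semigroup I with Frobenius number f is symmetric or
   pseudo-symmetric: x and f - x are both gaps of I only when 2x = f.  Every S
   with theta(I) <= S <= I has F(S) = f, and then L(S) consists of the x in I\S,
   their reflections f - x, and f/2 when f is even; so l(S) = 2#(I\S) + [f even],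
   and the parity hypothesis turns l(S) = K into #(I\S) = K/2.  Conversely,
   removing from I the K/2 smallest elements of I\theta(I) leaves a numerical
   semigroup: adding anything to a kept element of I\theta(I) stays above all the
   removed ones. *)

Lemma is_frobP (S : pred nat) (f : nat) :
  is_frob S (Posz f) <-> (forall n, f < n -> S n) /\ ~~ S f.
Proof.
split=> [[gtS [gapS _]] | [gtS gapS]].
  by split=> [n fn|]; [apply: gtS; rewrite ltz_nat | exact: gapS].
by split=> [n|]; [rewrite ltz_nat; exact: gtS | split=> // n [->]].
Qed.

Lemma is_frob_uniq (S : pred nat) (a b : int) : is_frob S a -> is_frob S b -> a = b.
Proof.
suff le_frob c d : is_frob S c -> is_frob S d -> (c <= d)%R.
  by move=> Ha Hb; apply/eqP; rewrite eq_le !le_frob.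
move=> [_ [gapS _]] [gtS [_ ge_d]]; rewrite leNgt; apply/negP => lt_dc.
case: c gapS lt_dc => [n|n] gapS lt_dc; last by move: lt_dc ge_d; rewrite NegzE; lia.
by move: (gapS n erefl); rewrite gtS.
Qed.

Lemma frobE (S : pred nat) (f : int) : is_frob S f -> frob S = f.
Proof. by move=> Hf; exact: (is_frob_uniq (epsilon_spec _ _ (ex_intro _ f Hf)) Hf). Qed.

Lemma numsg_is_frob (S : pred nat) : numsg S -> is_frob S (frob S).
Proof.
case=> _ _ [N gtS]; suff [f Hf] : exists f, is_frob S f by rewrite (frobE Hf).
have gap_lt i : ~~ S i -> i < N by apply: contraR; rewrite -leqNgt => /gtS.
have [/hasP[i _ Si] | /hasPn noGap] := boolP (has (predC S) (iota 0 N)).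
  have [g Sg maxg] := @ex_maxnP [pred i | ~~ S i] N (ex_intro _ i Si)
    (fun j Sj => ltnW (gap_lt j Sj)).
  exists (Posz g); apply/is_frobP; split=> // n lt_gn.
  by apply/negPn/negP => /maxg; rewrite leqNgt lt_gn.
exists (-1)%R; split=> [n _|]; last by split.
have [lt_nN | /gtS //] := ltnP n N.
by apply/negPn; apply: noGap; rewrite mem_iota.
Qed.

Lemma numsg_addgap (S : pred nat) (g : nat) :
  numsg S -> S (g + g) -> (forall s, S s -> 0 < s -> S (s + g)) ->
  numsg (fun n => S n || (n == g)).
Proof.
case=> S0 addS [N gtS] Sgg Sg; split; first by rewrite S0.
  move=> a b /orP[Sa | /eqP->] /orP[Sb | /eqP->]; first by rewrite addS.
  - by have [->|a_gt0] := posnP a; [rewrite add0n eqxx orbT | rewrite Sg].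
  - by have [->|b_gt0] := posnP b; [rewrite addn0 eqxx orbT | rewrite addnC Sg].
  - by rewrite Sgg.
by exists N => n /gtS ->.
Qed.

Lemma irreducible_addgaps (S : pred nat) (g1 g2 : nat) :
  irreducible_ns S -> g1 != g2 -> ~~ S g1 -> ~~ S g2 ->
  numsg (fun n => S n || (n == g1)) -> ~ numsg (fun n => S n || (n == g2)).
Proof.
move=> [_ irrS] g12 Sg1 Sg2 num1 num2; apply: irrS.
have proper g : ~~ S g -> proper_ S (fun n => S n || (n == g)).
  by move=> Sg; split=> [x ->|] //; exists g; rewrite eqxx orbT.
exists (fun n => S n || (n == g1)), (fun n => S n || (n == g2)).
split=> //; split=> //; split; first exact: proper.
split=> [|x]; first exact: proper.
case: (S x) => //=; apply/esym/negbTE.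
by apply: contra g12 => /andP[/eqP<- /eqP<-].
Qed.

Lemma count_iota_rev (a : pred nat) (n : nat) :
  count (fun x => a (n - x)) (iota 0 n.+1) = count a (iota 0 n.+1).
Proof.
rewrite -!sum1_count -[iota 0 n.+1]/(index_iota 0 n.+1) [RHS]big_nat_rev.
by apply: eq_bigl => i; rewrite add0n subSS.
Qed.

Lemma count_iota_half (n : nat) :
  count (fun x => x.*2 == n) (iota 0 n.+1) = ~~ odd n.
Proof.
have [odd_n | even_n] := boolP (odd n).
  apply/eqP; rewrite -leqn0 leqNgt -has_count; apply/hasP => -[x _ /eqP E].
  by move: odd_n; rewrite -E odd_double.
rewrite (eq_count (a2 := pred1 n./2)) => [|x /=]; last by apply/eqP/eqP; lia.
by rewrite count_uniq_mem ?iota_uniq // mem_iota; lia.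
Qed.

Lemma count_iota_mono (a : pred nat) (x y : nat) :
  x <= y -> count a (iota 0 x) <= count a (iota 0 y).
Proof. by move=> le_xy; rewrite -(subnKC le_xy) iotaD count_cat leq_addr. Qed.

Lemma count_sum (T : eqType) (a : pred T) (s : seq T) :
  count a s = \sum_(x <- s) a x.
Proof. by elim: s => [|x s IH]; rewrite ?big_nil ?big_cons //= IH. Qed.

Section Irreducible.

Variables (I : pred nat) (f : nat).
Hypotheses (irrI : irreducible_ns I) (frobI : is_frob I (Posz f)).

Let gtI : forall n, f < n -> I n := ((is_frobP I f).1 frobI).1.
Let If : ~~ I f := ((is_frobP I f).1 frobI).2.

Lemma irreducible_frob_gt0 : 0 < f.
Proof. by rewrite lt0n; apply: contraNneq If => ->; have [] := irrI.1. Qed.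

(* For a counterexample, the largest one h has 2h > f, so I + {h} and I + {f}
   are both numerical semigroups, contradicting irreducibility. *)
Lemma irreducible_gap_pair (x : nat) : x <= f -> ~~ I x -> ~~ I (f - x) -> x.*2 = f.
Proof.
have numI := irrI.1; have [I0 addI _] := numI.
pose bad y := [&& y <= f, ~~ I y, ~~ I (f - y) & y.*2 != f].
move=> le_xf Ix Ifx; apply/eqP/negPn/negP => x2.
have bad_x : bad x by rewrite /bad le_xf Ix Ifx.
have bad_le y : bad y -> y <= f by case/and4P.
have [h /and4P[le_hf Ih Ifh h2] maxh] := ex_maxnP (ex_intro _ x bad_x) bad_le.
have bad_fh : bad (f - h).
  by rewrite /bad leq_subr Ifh subKn // Ih /=; apply: contra h2 => /eqP E; apply/eqP; lia.
have lt_f_hh : f < h + h by move: (maxh _ bad_fh) h2 => + /eqP; lia.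
have h_neq_f : h != f by apply: contraNneq Ifh => ->; rewrite subnn.
have f_gt0 := irreducible_frob_gt0.
apply: (irreducible_addgaps irrI h_neq_f Ih If); apply: numsg_addgap; rewrite ?gtI //.
- move=> s Is s_gt0; apply/negPn/negP => Ish.
  have le_shf : s + h <= f by rewrite leqNgt; apply: contra Ish => /gtI.
  have Ifsh : ~~ I (f - (s + h)).
    apply: contra Ifh => Ifsh; rewrite (_ : f - h = f - (s + h) + s); last by lia.
    exact: addI Ifsh Is.
  have : bad (s + h) by rewrite /bad le_shf Ish Ifsh /=; apply/eqP; lia.
  by move/maxh; lia.
- by lia.
- by move=> s _ s_gt0; apply: gtI; lia.
Qed.

Variable S : pred nat.
Hypotheses (S0 : S 0) (gtS : forall n, f < n -> S n) (subSI : forall n, S n -> I n).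

Lemma frob_between : frob S = Posz f.
Proof. by apply/frobE/is_frobP; split=> //; apply: contra If; exact: subSI. Qed.

Lemma inL_between (x : nat) : x <= f ->
  inL S x = (I x && ~~ S x) + (I (f - x) && ~~ S (f - x)) + (x.*2 == f) :> nat.
Proof.
move=> le_xf; have f_gt0 := irreducible_frob_gt0; have [_ addI _] := irrI.1.
rewrite /inL /inN frob_between subzn // ltz_nat /=.
have [->|x_gt0] := posnP x.
  by rewrite S0 subn0 (negbTE If) andbF double0 eq_sym eqn0Ngt f_gt0.
have -> : f - x < f by lia.
have nIfx : I x -> ~~ I (f - x).
  by move=> Ix; apply: contra If => Ifx; rewrite -(subnKC le_xf); exact: addI.
have nS n : ~~ I n -> S n = false by move=> In; apply/negbTE; apply: contra In; exact: subSI.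
have [x2|x2] := eqVneq x.*2 f.
  have fx : f - x = x by lia.
  have nIx : ~~ I x by apply: contra If => Ix; rewrite -x2 -addnn; exact: addI.
  by rewrite fx (negbTE nIx) nS.
have [Ix|nIx] := boolP (I x).
  by rewrite (negbTE (nIfx Ix)) (nS _ (nIfx Ix)) /= andbT !addn0.
have Ifx : I (f - x).
  by apply/negPn/negP => nIfx'; move: x2; rewrite (irreducible_gap_pair le_xf nIx nIfx') eqxx.
by rewrite (nS _ nIx) Ifx /= andbT add0n addn0.
Qed.

Lemma lS_between :
  lS S = (count (fun x => I x && ~~ S x) (iota 0 f.+1)).*2 + ~~ odd f.
Proof.
rewrite /lS frob_between ltz_nat ltn0 absz_nat.
rewrite -addnn -{2}(count_iota_rev (fun x => I x && ~~ S x)) -count_iota_half.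
rewrite !count_sum -!big_split; apply: eq_big_seq => x.
by rewrite mem_iota ltnS => /inL_between.
Qed.

End Irreducible.

Section RemoveSmallest.

Variables (I T : pred nat) (m : nat).
Hypotheses (numI : numsg I) (numT : numsg T) (subTI : forall n, T n -> I n).

Definition outside (n : nat) : bool := I n && ~~ T n.

Definition smallest_outside (n : nat) : bool :=
  outside n && (count outside (iota 0 n) < m).

Definition remove_smallest (n : nat) : bool := I n && ~~ smallest_outside n.

Lemma remove_smallest_sub (n : nat) : remove_smallest n -> I n.
Proof. by case/andP. Qed.

Lemma sub_remove_smallest (n : nat) : T n -> remove_smallest n.
Proof. by move=> Tn; rewrite /remove_smallest /smallest_outside /outside subTI ?Tn. Qed.

Lemma numsg_remove_smallest : numsg remove_smallest.
Proof.
have [T0 addT [N gtT]] := numT; have [_ addI _] := numI.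
have keep_add x y : remove_smallest y -> ~~ T y -> ~~ smallest_outside (x + y).
  move=> /andP[Iy]; rewrite /smallest_outside {1}/outside Iy => + nTy.
  rewrite nTy -leqNgt => le_my; apply/nandP; right; rewrite -leqNgt.
  exact: leq_trans le_my (count_iota_mono _ (leq_addl x y)).
split; [exact: sub_remove_smallest | | by exists N => n /gtT/sub_remove_smallest].
move=> x y Sx Sy; rewrite /remove_smallest addI ?remove_smallest_sub //=.
have [Tx|nTx] := boolP (T x); last by rewrite addnC keep_add.
have [Ty|nTy] := boolP (T y); last exact: keep_add.
by have /andP[] := sub_remove_smallest (addT _ _ Tx Ty).
Qed.

Lemma count_smallest_outside (n : nat) :
  count smallest_outside (iota 0 n) = minn (count outside (iota 0 n)) m.
Proof.
elim: n => [|n IH]; first by rewrite min0n.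
rewrite -addn1 iotaD add0n !count_cat IH /= /smallest_outside; case: (outside n) => /=; lia.
Qed.

Lemma count_removed (n : nat) :
  count (fun x => I x && ~~ remove_smallest x) (iota 0 n) = minn (count outside (iota 0 n)) m.
Proof.
rewrite -count_smallest_outside; apply: eq_count => x; rewrite /remove_smallest.
case: (boolP (smallest_outside x)) => [/andP[/andP[Ix _] _]|_]; last by rewrite andbT andbN.
by rewrite Ix.
Qed.

End RemoveSmallest.

Lemma generatedD (X : pred nat) (a b : nat) :
  generated X a -> generated X b -> generated X (a + b).
Proof. by move=> [s [Xs <-]] [t [Xt <-]]; exists (s ++ t); rewrite all_cat Xs Xt sumn_cat. Qed.

Lemma generated_sub (X S : pred nat) (n : nat) :
  numsg S -> (forall x, X x -> S x) -> generated X n -> S n.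
Proof.
case=> S0 addS _ XS [s [Xs <-]]; elim: s Xs => //= x s IH /andP[Xx Xs].
exact: addS (XS _ Xx) (IH Xs).
Qed.

Definition theta_pred (I : pred nat) : pred nat := fun n => `[< theta I n >].

Section Theta.

Variables (I : pred nat) (f : nat).
Hypotheses (numI : numsg I) (frobI : is_frob I (Posz f)).

Lemma thetaE (n : nat) : theta I n <-> generated (Delta I) n \/ f < n.
Proof. by rewrite /theta (frobE frobI) ltz_nat. Qed.

Lemma theta_gt (n : nat) : f < n -> theta I n.
Proof. by move=> lt_fn; apply/thetaE; right. Qed.

Lemma theta_sub (n : nat) : theta I n -> I n.
Proof.
case/thetaE => [|/((is_frobP I f).1 frobI).1 //].
by apply: generated_sub numI _ => x /andP[].
Qed.

Lemma numsg_theta : numsg (theta_pred I).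
Proof.
split.
- by apply/asboolP/thetaE; left; exists [::].
- move=> a b /asboolP/thetaE[Ga|lt_fa] /asboolP/thetaE[Gb|lt_fb]; apply/asboolP/thetaE;
    [by left; exact: generatedD | by right; lia ..].
- by exists f.+1 => n lt_fn; apply/asboolP/theta_gt.
Qed.

Lemma count_outside_theta (s : seq nat) :
  uniq s -> (forall x, x \in s -> I x /\ ~ theta I x) ->
  size s <= count (outside I (theta_pred I)) (iota 0 f.+1).
Proof.
move=> uniq_s s_out; rewrite -size_filter; apply: uniq_leq_size => // x /s_out[Ix nthetax].
rewrite mem_filter mem_iota /outside Ix ltnS /=; apply/andP; split; first exact/asboolPn.
by rewrite leqNgt; apply: contra_notN nthetax => /theta_gt.
Qed.

End Theta.

Section ThetaInterval.

Variables (I : pred nat) (f : nat).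
Hypotheses (irrI : irreducible_ns I) (frobI : is_frob I (Posz f)).

Lemma lS_theta_interval (S : pred nat) :
  numsg S -> (forall x, theta I x -> S x) -> (forall x, S x -> I x) ->
  lS S = (count (fun x => I x && ~~ S x) (iota 0 f.+1)).*2 + ~~ odd f.
Proof.
by case=> S0 _ _ thetaS subSI; apply: lS_between => // n /(theta_gt frobI)/thetaS.
Qed.

Lemma remove_smallest_theta_interval (m : nat) :
  let S := remove_smallest I (theta_pred I) m in
  [/\ numsg S, forall x, theta I x -> S x & forall x, S x -> I x].
Proof.
have subTI n : theta_pred I n -> I n by move/asboolP/(theta_sub irrI.1 frobI).
split; last exact: remove_smallest_sub.
  exact: numsg_remove_smallest irrI.1 (numsg_theta frobI) subTI.
by move=> x /asboolP/(sub_remove_smallest m subTI).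
Qed.

End ThetaInterval.

Lemma double_add_even_eqE (f K c : nat) :
  odd (f + K) -> (c.*2 + ~~ odd f = K) <-> (c = K./2).
Proof. by rewrite oddD; case: (odd f) => /= oddK; split; lia. Qed.

Theorem proposition39 (I : pred nat) (K : nat) :
  irreducible_ns I ->
  odd (absz (frob I + Posz K)%R) ->
  (Posz K + 1 <= frob I)%R ->
  (exists S : pred nat,
      numsg S /\ (forall x, theta I x -> S x) /\ (forall x, S x -> I x) /\ lS S = K)
  <->
  (exists s : seq nat,
      uniq s /\ (forall x, x \in s -> I x /\ ~ theta I x) /\ K./2 <= size s).
Proof.
move=> irrI oddfK leKf.
have [f Ef] : exists f : nat, frob I = Posz f.
  by case: (frob I) leKf => [f|f] leKf; [exists f | move: leKf; rewrite NegzE; lia].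
have frobI : is_frob I (Posz f) by rewrite -Ef; exact: numsg_is_frob irrI.1.
have {oddfK} oddfK : odd (f + K) by move: oddfK; rewrite Ef -PoszD absz_nat.
split=> [[S [numS [thetaS [subSI lSK]]]] | [s [uniq_s [s_out le_s]]]].
- rewrite (lS_theta_interval irrI frobI) // in lSK.
  exists [seq x <- iota 0 f.+1 | I x && ~~ S x].
  split; first by rewrite filter_uniq ?iota_uniq.
  split; last by rewrite size_filter ((double_add_even_eqE _ oddfK).1 lSK).
  move=> x; rewrite mem_filter => /andP[/andP[Ix nSx] _]; split=> // /thetaS Sx.
  by rewrite Sx in nSx.
- have [numS thetaS subSI] := remove_smallest_theta_interval irrI frobI K./2.
  exists (remove_smallest I (theta_pred I) K./2); do 3 split=> //.
  rewrite (lS_theta_interval irrI frobI) // count_removed.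
  apply/(double_add_even_eqE _ oddfK)/minn_idPr.
  exact: leq_trans le_s (count_outside_theta frobI uniq_s s_out).
Qed.
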